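(* Consider the system $x(k+1)=Ax(k)+Bu(k)$ with $A\in\mathbb{R}^{n\times n}$, $B\in\mathbb{R}^{n\times m}$ and $(A,B)$ controllable. Let $\{u_i^{[0,T_i-1]},x_i^{[0,T_i-1]}\}_{i=1}^p$ be $p$ input-state trajectories of this system, let $L\ge1$, and let $\alpha_1,\dots,\alpha_p$ be any nonzero real weights (used in all matrices below). Call a pair $(\bar x^{[0,L-1]},\bar u^{[0,L-1]})$ an $L$-long input-state trajectory if $\bar x(k+1)=A\bar x(k)+B\bar u(k)$ for $k=0,\dots,L-2$; write $\bar x^{[0,L-1]}$, $\bar u^{[0,L-1]}$ also for the stacked column vectors. 1) If $T_1=\dots=T_p=T_0$ and $\{u_i^{[0,T_0-1]}\}_{i=1}^p$ are CCPE of order $L+n$, then for every $L$-long input-state trajectory there is a real vector $g$ with $\begin{bmatrix}\bar x^{[0,L-1]}\\ \bar u^{[0,L-1]}\end{bmatrix}=\begin{bmatrix}H_L^{cum}(\{x_i^{[0,T_0-1]}\}_{i=1}^p)\\ H_L^{cum}(\{u_i^{[0,T_0-1]}\}_{i=1}^p)\end{bmatrix}g$. 2) If $\{u_i^{[0,T_i-1]}\}_{i=1}^p$ are MCPE of order $L+n$, then for every $L$-long input-state trajectory there is a real vector $g$ with $\begin{bmatrix}\bar x^{[0,L-1]}\\ \bar u^{[0,L-1]}\end{bmatrix}=\begin{bmatrix}H_L^{mos}(\{x_i^{[0,T_i-1]}\}_{i=1}^p)\\ H_L^{mos}(\{u_i^{[0,T_i-1]}\}_{i=1}^p)\end{bmatrix}g$.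 3) If $T_1=\dots=T_{\bar p}=T_0$ and $\{u_i^{[0,T_i-1]}\}_{i=1}^p$ are HCPE of order $L+n$ (cumulative part $u_1,\dots,u_{\bar p}$), then for every $L$-long input-state trajectory there is a real vector $g$ with $\begin{bmatrix}\bar x^{[0,L-1]}\\ \bar u^{[0,L-1]}\end{bmatrix}=\begin{bmatrix}H_L^{hyb}(\{x_i^{[0,T_i-1]}\}_{i=1}^p)\\ H_L^{hyb}(\{u_i^{[0,T_i-1]}\}_{i=1}^p)\end{bmatrix}g$.
   Context: For a sequence $z^{[0,T-1]}$ with $z(k)\in\mathbb{R}^q$ and $L\le T$, $H_L(z^{[0,T-1]})\in\mathbb{R}^{qL\times(T-L+1)}$ is the block Hankel matrix with $(r,c)$ block entry $z(r+c)$. With nonzero weights $\alpha_i$: $H_L^{mos}(\{z_i\}_{i=1}^p)=[\alpha_1H_L(z_1)\ \cdots\ \alpha_pH_L(z_p)]$; for equal-length sequences $H_L^{cum}(\{z_i\}_{i=1}^p)=\sum_i\alpha_iH_L(z_i)$; $H_L^{hyb}(\{z_i\}_{i=1}^p)=[H_L^{cum}(\{z_i\}_{i=1}^{\bar p})\ \ H_L^{mos}(\{z_i\}_{i=\bar p+1}^p)]$ with $z_1,\dots,z_{\bar p}$ of equal length. Input signals $u_i\in\mathbb{R}^m$ are MCPE (resp. CCPE, HCPE) of order $K$ if $H_K^{mos}$ (resp. $H_K^{cum}$, $H_K^{hyb}$) of the input sequences has full row rank $mK$ for every choice of nonzero weights. *)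

From HB Require Import structures.
From mathcomp Require Import all_boot all_order all_algebra.
From mathcomp Require Export reals.
Set Implicit Arguments. Unset Strict Implicit. Unset Printing Implicit Defensive.
Import Order.TTheory GRing.Theory Num.Theory.
Local Open Scope ring_scope.

(* Signals are functions nat -> 'cV_q; only the first T values matter. *)

(* stacked column vector [z(0); z(1); ...; z(L-1)] of size L*q *)
Definition stack (R : ringType) (q : nat) (L : nat) (z : nat -> 'cV[R]_q)
  : 'cV[R]_(L * q) :=
  (mxvec (\matrix_(r < L, a < q) z r a 0))^T.

Definition hankel (R : ringType) (q : nat) (L : nat) (z : nat -> 'cV[R]_q)
  (T : nat) : 'M[R]_(L * q, T - L + 1) :=
  \matrix_(i, j) stack L (fun k => z (k + j)) i 0.

Definition hankel_mos (R : ringType) (q : nat) (L : nat)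
  (z : nat -> nat -> 'cV[R]_q) (alpha : nat -> R) (p : nat) (T : nat -> nat)
  : 'M[R]_(L * q, \sum_(i < p) (T i - L + 1)) :=
  \mxrow_(i < p) (alpha i *: hankel L (z i) (T i)).

Definition hankel_cum (R : ringType) (q : nat) (L : nat)
  (z : nat -> nat -> 'cV[R]_q) (alpha : nat -> R) (p : nat) (T0 : nat)
  : 'M[R]_(L * q, T0 - L + 1) :=
  \sum_(i < p) alpha i *: hankel L (z i) T0.

Definition hankel_hyb (R : ringType) (q : nat) (L : nat)
  (z : nat -> nat -> 'cV[R]_q) (alpha : nat -> R) (pbar p : nat) (T0 : nat)
  (T : nat -> nat) :=
  row_mx (hankel_cum L z alpha pbar T0)
         (hankel_mos L (fun j => z (pbar + j)%N) (fun j => alpha (pbar + j)%N)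
                     (p - pbar) (fun j => T (pbar + j)%N)).

Definition MCPE (R : fieldType) (m : nat) (u : nat -> nat -> 'cV[R]_m)
  (p : nat) (T : nat -> nat) (K : nat) : Prop :=
  (forall i, (i < p)%N -> (K <= T i)%N) /\
  forall alpha : nat -> R, (forall i, (i < p)%N -> alpha i != 0) ->
    row_free (hankel_mos K u alpha p T).

Definition CCPE (R : fieldType) (m : nat) (u : nat -> nat -> 'cV[R]_m)
  (p : nat) (T0 : nat) (K : nat) : Prop :=
  (K <= T0)%N /\
  forall alpha : nat -> R, (forall i, (i < p)%N -> alpha i != 0) ->
    row_free (hankel_cum K u alpha p T0).

Definition HCPE (R : fieldType) (m : nat) (u : nat -> nat -> 'cV[R]_m)
  (pbar p : nat) (T0 : nat) (T : nat -> nat) (K : nat) : Prop :=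
  (pbar <= p)%N /\ ((0 < pbar)%N -> (K <= T0)%N) /\
  (forall i, (pbar <= i < p)%N -> (K <= T i)%N) /\
  forall alpha : nat -> R, (forall i, (i < p)%N -> alpha i != 0) ->
    row_free (hankel_hyb K u alpha pbar p T0 T).

Definition controllable (R : fieldType) (n m : nat) (A : 'M[R]_n)
  (B : 'M[R]_(n, m)) : Prop :=
  \rank (\mxrow_(k < n) (A ^+ k *m B)) = n.

Definition is_traj (R : ringType) (n m : nat) (A : 'M[R]_n) (B : 'M[R]_(n, m))
  (x : nat -> 'cV[R]_n) (u : nat -> 'cV[R]_m) (T : nat) : Prop :=
  forall k, (k.+1 < T)%N -> x k.+1 = A *m x k + B *m u k.

From HB Require Import structures.
From mathcomp Require Import all_boot all_order all_algebra.
From mathcomp Require Import reals zify.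
Set Implicit Arguments. Unset Strict Implicit. Unset Printing Implicit Defensive.
Import Order.TTheory GRing.Theory Num.Theory.
Local Open Scope ring_scope.

(* By duality, a stacked trajectory lies in the column space of the data
   matrix iff every row (y1, y2) annihilating the data annihilates it.  On an
   L-long trajectory such a row acts as x(0) |-> zeta x(0) plus input gains
   theta_t u(t).  The data contain the L-subwindows at shifts s = 0..n of
   (L+n)-long data windows; combining these n+1 shifted responses with the
   coefficients of the characteristic polynomial of A removes x(0) by
   Cayley-Hamilton and leaves a linear form in the (L+n)-long input window
   that vanishes on the data, hence is zero by persistent excitation.  Its
   coefficients form a monic recurrence in (zeta A^d B)_(d<n) and theta, so
   all of these vanish, and controllability forces zeta = 0.  Cumulative,
   mosaic and hybrid Hankel matrices only differ in how the data windows are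
   collected: the Hankel matrix of the weighted sum trajectory, a row of
   Hankel matrices of scaled trajectories, or a row of both. *)

Section Stacks.
Variables (R : ringType) (q K : nat).

Definition rstack (w : nat -> 'rV[R]_q) : 'rV[R]_(K * q) :=
  mxvec (\matrix_(k < K, a < q) w k 0 a).

Lemma mul_rstack_stack (w : nat -> 'rV[R]_q) (z : nat -> 'cV[R]_q) :
  rstack w *m stack K z = \sum_(0 <= k < K) w k *m z k.
Proof.
apply/rowP=> i; rewrite {i}ord1 !mxE summxE big_mkord.
rewrite (reindex _ (curry_mxvec_bij _ _)) /=.
under [RHS]eq_bigr do rewrite mxE.
rewrite pair_bigA; apply: eq_bigr => -[k a] _.
by rewrite /stack !mxE !mxvecE !mxE.
Qed.

Lemma rstack_eq0 (w : nat -> 'rV[R]_q) k : rstack w = 0 -> (k < K)%N -> w k = 0.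
Proof.
move=> /(congr1 vec_mx); rewrite mxvecK linear0 => /matrixP w0 ltkK.
by apply/rowP => a; have := w0 (Ordinal ltkK) a; rewrite !mxE.
Qed.

Lemma rstack_surj (y : 'rV[R]_(K * q)) : exists w, y = rstack w.
Proof.
exists (fun k => if insub k is Some i then row i (vec_mx y) else 0).
rewrite -[LHS]vec_mxK /rstack; congr mxvec.
by apply/matrixP => k a; rewrite !mxE valK !mxE.
Qed.

Lemma eq_stack (z1 z2 : nat -> 'cV[R]_q) : z1 =1 z2 -> stack K z1 = stack K z2.
Proof.
by move=> e; rewrite /stack; congr (mxvec _)^T; apply/matrixP => k a; rewrite !mxE e.
Qed.

Lemma mul_hankel_entry (y : 'rV[R]_(K * q)) z T (j : 'I_(T - K + 1)) :
  (y *m hankel K z T) 0 j = (y *m stack K (fun k => z (k + j)%N)) 0 0.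
Proof. by rewrite !mxE; apply: eq_bigr => i _; rewrite !mxE. Qed.

Lemma hankelZ (a : R) (z : nat -> 'cV[R]_q) T :
  hankel K (fun t => a *: z t) T = a *: hankel K z T.
Proof.
apply/matrixP => i j; rewrite !mxE.
by case/mxvec_indexP: i => k b; rewrite !mxvecE !mxE.
Qed.

Lemma hankel_cumE (z : nat -> nat -> 'cV[R]_q) alpha p T0 :
  hankel_cum K z alpha p T0 = hankel K (fun t => \sum_(i < p) alpha i *: z i t) T0.
Proof.
apply/matrixP => i j; rewrite /hankel_cum summxE !mxE.
case/mxvec_indexP: i => k b; rewrite mxvecE mxE summxE.
by apply: eq_bigr => i _; rewrite !mxE mxvecE !mxE.
Qed.

Lemma hankel_mosE (z : nat -> nat -> 'cV[R]_q) alpha p T :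
  hankel_mos K z alpha p T = \mxrow_(i < p) hankel K (fun t => alpha i *: z i t) (T i).
Proof. by apply/eq_mxrowP => i; rewrite hankelZ. Qed.

End Stacks.

Section Trajectories.
Variables (R : comRingType) (n m : nat) (A : 'M[R]_n) (B : 'M[R]_(n, m)).

Lemma is_trajZ a x u T : is_traj A B x u T ->
  is_traj A B (fun t => a *: x t) (fun t => a *: u t) T.
Proof. by move=> tr k ltkT; rewrite tr // scalerDr -!scalemxAr. Qed.

Lemma is_traj_sum p (a : 'I_p -> R) (x : 'I_p -> nat -> 'cV[R]_n) u T :
  (forall i, is_traj A B (x i) (u i) T) ->
  is_traj A B (fun t => \sum_i a i *: x i t) (fun t => \sum_i a i *: u i t) T.
Proof.
move=> tr k ltkT; rewrite !mulmx_sumr -big_split /=.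
by apply: eq_bigr => i _; rewrite (is_trajZ (a i) (tr i)).
Qed.

Lemma is_traj_stateE x u N : is_traj A B x u N -> forall k, (k < N)%N ->
  x k = A ^+ k *m x 0 + \sum_(0 <= t < k) A ^+ (k - t.+1) *m B *m u t.
Proof.
have AXS t : A *m A ^+ t = A ^+ t.+1 by rewrite exprS.
move=> tr; elim=> [|k IH] ltkN; first by rewrite expr0 mul1mx big_geq // addr0.
rewrite tr // IH 1?ltnW // mulmxDr mulmxA AXS big_nat_recr //=.
rewrite subnn expr0 mul1mx addrA mulmx_sumr; congr (_ + _ + _).
by apply: eq_big_nat => t /andP[_ ltk]; rewrite !mulmxA AXS subSS -subSn.
Qed.

Variant window K (x : nat -> 'cV[R]_n) (u : nat -> 'cV[R]_m) T :
    (nat -> 'cV[R]_n) -> (nat -> 'cV[R]_m) -> Prop :=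
  Window j of (j + K <= T)%N :
    window K x u T (fun k => x (k + j)%N) (fun k => u (k + j)%N).

Lemma window_traj K x u T x' u' :
  is_traj A B x u T -> window K x u T x' u' -> is_traj A B x' u' K.
Proof. by move=> tr [j ltjT] k ltkK; rewrite addSn tr //; lia. Qed.

End Trajectories.

Lemma Cayley_Hamilton_coef (R : comRingType) n (A : 'M[R]_n) :
  \sum_(s < n.+1) (char_poly A)`_s *: A ^+ s = 0.
Proof.
case: n A => [|n] A; first exact: flatmx0.
rewrite -[RHS](Cayley_Hamilton A) -[in RHS](coefK (char_poly A)) poly_def.
rewrite size_char_poly [RHS]linear_sum; apply: eq_bigr => s _.
by rewrite linearZ /= rmorphXn /= horner_mx_X.
Qed.

Lemma char_poly_coefn (R : ringType) n (A : 'M[R]_n) : (char_poly A)`_n = 1.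
Proof. by have /monicP := char_poly_monic A; rewrite /lead_coef size_char_poly. Qed.

Lemma monic_recurrence_eq0 (R : ringType) (V : lmodType R) N d (b : nat -> R)
    (v : nat -> V) :
  b 0%N = 1 -> (forall i, (N <= i)%N -> v i = 0) ->
  (forall k, (k < N)%N -> \sum_(j < d.+1) b j *: v (k + j)%N = 0) ->
  forall i, v i = 0.
Proof.
move=> b0 vN rec; suff vt t i : (N - i <= t)%N -> v i = 0.
  by move=> i; apply: (vt (N - i)%N).
elim: t i => [|t IH] i leNi; first by apply: vN; lia.
have [/vN//|ltiN] := leqP N i.
have := rec i ltiN; rewrite big_ord_recl b0 scale1r addn0 big1 ?addr0 // => j _.
by rewrite IH ?scaler0 // lift0; lia.
Qed.

Lemma controllable_row_eq0 (R : fieldType) n m (A : 'M[R]_n) (B : 'M[R]_(n, m))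
    (zeta : 'rV[R]_n) :
  controllable A B -> (forall d, (d < n)%N -> zeta *m A ^+ d *m B = 0) -> zeta = 0.
Proof.
move=> ctrl zAB0; have free : row_free (\mxrow_(d < n) (A ^+ d *m B)).
  by rewrite /row_free ctrl.
apply/eqP; rewrite -(mulmx_free_eq0 _ free) mul_mxrow -(mxrow0 (q_ := fun=> m)).
by apply/eqP/eq_mxrowP => d; rewrite mulmxA zAB0.
Qed.

Lemma colspace_dual (R : fieldType) r c (M : 'M[R]_(r, c)) (w : 'cV[R]_r) :
  (forall y : 'rV[R]_r, y *m M = 0 -> y *m w = 0) -> exists g, w = M *m g.
Proof.
move=> Mw; suff /submxP[g wg] : (w^T <= M^T)%MS.
  by exists g^T; rewrite -[w]trmxK wg trmx_mul trmxK.
have cokerM : (cokermx M^T)^T *m M = 0.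
  by apply: trmx_inj; rewrite trmx_mul trmxK mulmx_coker trmx0.
rewrite submxE -trmx0 -(trmxK (w^T *m _)) trmx_mul trmxK; apply/eqP; congr trmx.
by apply/row_matrixP => i; rewrite row_mul row0 Mw // -row_mul cokerM row0.
Qed.

Section Fundamental.
Variables (R : fieldType) (n m L : nat) (A : 'M[R]_n) (B : 'M[R]_(n, m)).

Definition init_gain (xi : nat -> 'rV[R]_n) : 'rV[R]_n :=
  \sum_(0 <= k < L) xi k *m A ^+ k.

Definition input_gain (xi : nat -> 'rV[R]_n) (eta : nat -> 'rV[R]_m) t : 'rV[R]_m :=
  eta t + \sum_(0 <= k < L | (t < k)%N) xi k *m A ^+ (k - t.+1) *m B.

Lemma traj_responseE xi eta x u : is_traj A B x u L ->
  rstack L xi *m stack L x + rstack L eta *m stack L u =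
  init_gain xi *m x 0 + \sum_(0 <= t < L) input_gain xi eta t *m u t.
Proof.
move=> tr; rewrite !mul_rstack_stack.
rewrite (eq_big_nat _ _ (F2 := fun k => xi k *m A ^+ k *m x 0 +
    \sum_(0 <= t < L | (t < k)%N) xi k *m A ^+ (k - t.+1) *m B *m u t)); last first.
  move=> k /andP[_ ltkL]; rewrite (is_traj_stateE tr ltkL) mulmxDr mulmxA.
  rewrite (big_nat_widen _ _ _ _ _ (ltnW ltkL)) mulmx_sumr; congr (_ + _).
  by apply: eq_bigr => t _; rewrite !mulmxA.
rewrite big_split /= -mulmx_suml -addrA; congr (_ + _).
rewrite (exchange_big_dep_nat xpredT) //= -big_split /=; apply: eq_bigr => t _.
by rewrite addrC mulmxDl mulmx_suml.
Qed.

(* The input coefficients of all shifted responses packed in one sequence: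
   the rows zeta A^d B (d < n) in reverse order, followed by theta_0 .. theta_(L-1);
   the response at shift s has coefficient response_coef (k + n - s) on u k. *)
Definition response_coef (zeta : 'rV[R]_n) (theta : nat -> 'rV[R]_m) i : 'rV[R]_m :=
  if (i < n)%N then zeta *m A ^+ (n - i.+1) *m B
  else if (i - n < L)%N then theta (i - n)%N else 0.

(* S is a set of (L+n)-long trajectories; the last two clauses are the dual
   forms of: the columns of Mu' lie in the span of the stacked inputs of S, and
   the L-subwindows at shifts s <= n of members of S lie in the column space
   of col_mx Mx Mu. *)
Definition window_data (S : (nat -> 'cV[R]_n) -> (nat -> 'cV[R]_m) -> Prop)
    N N' (Mx : 'M[R]_(L * n, N)) (Mu : 'M[R]_(L * m, N))
    (Mu' : 'M[R]_((L + n) * m, N')) :=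
  [/\ forall x u, S x u -> is_traj A B x u (L + n),
      forall g : 'rV_((L + n) * m),
        (forall x u, S x u -> g *m stack (L + n) u = 0) -> g *m Mu' = 0 &
      forall (y1 : 'rV_(L * n)) (y2 : 'rV_(L * m)), y1 *m Mx + y2 *m Mu = 0 ->
      forall x u, S x u -> forall s, (s <= n)%N ->
      y1 *m stack L (fun k => x (k + s)%N) + y2 *m stack L (fun k => u (k + s)%N) = 0].

Definition windowed N N' Mx Mu Mu' := exists S, @window_data S N N' Mx Mu Mu'.

Section Annihilator.
(* The shift s = n reads x n, which lies in an (L+n)-long window only if L > 0. *)
Hypotheses (L_gt0 : (0 < L)%N) (ctrl : controllable A B).

Lemma shifted_responseE zeta theta x u s :
  is_traj A B x u (L + n) -> (s <= n)%N ->
  zeta *m x s + \sum_(0 <= t < L) theta t *m u (t + s)%N =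
  zeta *m A ^+ s *m x 0 +
    \sum_(0 <= k < L + n) response_coef zeta theta (k + n - s) *m u k.
Proof.
move=> tr lesn; have ltsLn : (s < L + n)%N by lia.
rewrite (is_traj_stateE tr ltsLn) mulmxDr mulmxA -addrA; congr (_ + _).
rewrite [RHS](big_cat_nat _ (n := s)) //=; last by lia.
rewrite [X in _ = _ + X](big_cat_nat _ (n := s + L)) /=; [|lia|lia].
rewrite [X in _ + (_ + X)]big1_seq ?addr0; last first.
  move=> k /andP[_]; rewrite mem_index_iota => /andP[lek _].
  by rewrite /response_coef !ifN ?mul0mx //; lia.
rewrite mulmx_sumr; congr (_ + _).
  apply: eq_big_nat => k /andP[_ ltks]; rewrite /response_coef ifT; last by lia.
  by rewrite !mulmxA; congr (_ *m _ ^+ _ *m _ *m _); lia.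
rewrite -{2}[s]add0n big_addn addKn; apply: eq_big_nat => t /andP[_ lttL].
by rewrite /response_coef ifN; [rewrite ifT; [congr (theta _ *m _); lia | lia] | lia].
Qed.

Section Windows.
Variable S : (nat -> 'cV[R]_n) -> (nat -> 'cV[R]_m) -> Prop.
Hypothesis S_traj : forall x u, S x u -> is_traj A B x u (L + n).
Hypothesis S_exciting : forall g : 'rV[R]_((L + n) * m),
  (forall x u, S x u -> g *m stack (L + n) u = 0) -> g = 0.

Lemma response_coef_eq0 zeta theta :
  (forall x u, S x u -> forall s, (s <= n)%N ->
     zeta *m x s + \sum_(0 <= t < L) theta t *m u (t + s)%N = 0) ->
  forall i, response_coef zeta theta i = 0.
Proof.
move=> resp0; pose a s := (char_poly A)`_s.
apply: (monic_recurrence_eq0 (N := (L + n)%N) (d := n) (b := fun j => a (n - j)%N)).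
- by rewrite subn0 /a char_poly_coefn.
- by move=> i leLi; rewrite /response_coef !ifN //; lia.
(* G k is the coefficient of u k in the sum over s of a s times the shift-s response. *)
pose G k := \sum_(j < n.+1) a (n - j)%N *: response_coef zeta theta (k + j).
move=> k ltk; apply: (rstack_eq0 (K := (L + n)%N) (w := G) (k := k)) ltk => /=.
apply: S_exciting => x u Sxu; rewrite mul_rstack_stack.
transitivity (\sum_(s < n.+1)
    a s *: (zeta *m x s + \sum_(0 <= t < L) theta t *m u (t + s)%N)); last first.
  by apply: big1 => s _; rewrite (resp0 _ _ Sxu) ?scaler0 // -ltnS.
rewrite [RHS](eq_bigr (fun s : 'I_n.+1 => a s *: (zeta *m A ^+ s *m x 0) +
    a s *: \sum_(0 <= k < L + n) response_coef zeta theta (k + n - s) *m u k));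
  last first.
  by move=> s _; rewrite (shifted_responseE _ _ (S_traj Sxu) (ltn_ord s)) scalerDr.
rewrite big_split /= [X in _ = X + _](_ : _ = 0) ?add0r; last first.
  under eq_bigr => s _ do rewrite scalemxAl scalemxAr.
  by rewrite -mulmx_suml -mulmx_sumr Cayley_Hamilton_coef mulmx0 mul0mx.
under eq_bigr => i _ do rewrite mulmx_suml.
rewrite exchange_big /= [RHS](reindex_inj rev_ord_inj) /=; apply: eq_bigr => j _.
rewrite scaler_sumr; apply: eq_big_nat => i _; rewrite -scalemxAl subSS.
by congr (_ *: (response_coef _ _ _ *m _)); have := ltn_ord j; lia.
Qed.

Lemma window_annihilator xi eta :
  (forall x u, S x u -> forall s, (s <= n)%N ->
     rstack L xi *m stack L (fun k => x (k + s)%N) +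
     rstack L eta *m stack L (fun k => u (k + s)%N) = 0) ->
  forall xb ub, is_traj A B xb ub L ->
  rstack L xi *m stack L xb + rstack L eta *m stack L ub = 0.
Proof.
move=> annih xb ub tr.
have coef0 i : response_coef (init_gain xi) (input_gain xi eta) i = 0.
  apply: response_coef_eq0 => x u Sxu s lesn.
  rewrite -[RHS](annih x u Sxu s lesn) traj_responseE //.
  by move=> k ltkL; rewrite addSn (S_traj Sxu) //; lia.
have input0 t : (t < L)%N -> input_gain xi eta t = 0.
  by move=> ltL; have := coef0 (t + n)%N; rewrite /response_coef ifN ?addnK ?ifT //; lia.
have init0 : init_gain xi = 0.
  apply: (controllable_row_eq0 ctrl) => d ltdn; have := coef0 (n - d.+1)%N.
  by rewrite /response_coef ifT; [congr (_ *m _ ^+ _ *m _ = _); lia | lia].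
rewrite traj_responseE // init0 mul0mx add0r big_nat big1 // => t /andP[_ ltL].
by rewrite input0 ?mul0mx.
Qed.

End Windows.

Theorem windowed_colspace N N' Mx Mu Mu' xb ub :
  @windowed N N' Mx Mu Mu' -> row_free Mu' -> is_traj A B xb ub L ->
  exists g, col_mx (stack L xb) (stack L ub) = col_mx Mx Mu *m g.
Proof.
move=> [S [S_traj S_span S_cover]] free tr; apply: colspace_dual => y.
rewrite -[y]hsubmxK !mul_row_col.
have [xi ->] := rstack_surj (lsubmx y); have [eta ->] := rstack_surj (rsubmx y).
move=> annih.
apply: (window_annihilator S_traj) => // [g Sg|x u Sxu].
  by apply/eqP; rewrite -(mulmx_free_eq0 _ free) S_span.
exact: S_cover.
Qed.

End Annihilator.

Lemma windowed_hankel x u T : is_traj A B x u T -> (L + n <= T)%N ->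
  windowed (hankel L x T) (hankel L u T) (hankel (L + n) u T).
Proof.
move=> tr leLnT; exists (window (L + n) x u T); split.
- by move=> x' u'; apply: window_traj.
- move=> g Sg; apply/rowP => j; have lejT : (j + (L + n) <= T)%N.
    by have := ltn_ord j; lia.
  by rewrite mul_hankel_entry (Sg _ _ (Window x u lejT)) !mxE.
move=> y1 y2 /rowP annih _ _ [j leT] s lesn.
have ltjs : (s + j < T - L + 1)%N by lia.
have := annih (Ordinal ltjs); rewrite {1}mxE !mul_hankel_entry /= => annih_js.
have shiftE q (z : nat -> 'cV[R]_q) :
  (fun k => z (k + s + j)%N) =1 (fun k => z (k + (s + j))%N) by move=> k; rewrite addnA.
apply/rowP => i; rewrite ord1 {1}mxE.
rewrite (eq_stack _ (shiftE _ x)) (eq_stack _ (shiftE _ u)).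
by apply: etrans annih_js _; rewrite !mxE.
Qed.

Lemma windowed_mxrow p (N_ N'_ : 'I_p -> nat) (Mx_ : forall i, 'M_(L * n, N_ i))
    (Mu_ : forall i, 'M_(L * m, N_ i)) (Mu'_ : forall i, 'M_((L + n) * m, N'_ i)) :
  (forall i, windowed (Mx_ i) (Mu_ i) (Mu'_ i)) ->
  windowed (\mxrow_i Mx_ i) (\mxrow_i Mu_ i) (\mxrow_i Mu'_ i).
Proof.
move=> /fin_all_exists[S_ dataS]; exists (fun x u => exists i, S_ i x u); split.
- by move=> x u [i]; case: (dataS i) => S_traj _ _; apply: S_traj.
- move=> g Sg; rewrite mul_mxrow -(mxrow0 (q_ := N'_)); apply/eq_mxrowP => i.
  by case: (dataS i) => _ S_span _; apply: S_span => x u Sxu; apply: (Sg x); exists i.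
move=> y1 y2; rewrite !mul_mxrow -mxrowD -(mxrow0 (q_ := N_)) => /eq_mxrowP annih.
by move=> x u [i Sxu]; case: (dataS i) => _ _ S_cover; apply: S_cover (annih i) _ _ Sxu.
Qed.

Lemma windowed_row_mx N1 N2 N1' N2' Mx1 Mu1 Mu1' Mx2 Mu2 Mu2' :
  @windowed N1 N1' Mx1 Mu1 Mu1' -> @windowed N2 N2' Mx2 Mu2 Mu2' ->
  windowed (row_mx Mx1 Mx2) (row_mx Mu1 Mu2) (row_mx Mu1' Mu2').
Proof.
move=> [S1 [S1_traj S1_span S1_cover]] [S2 [S2_traj S2_span S2_cover]].
exists (fun x u => S1 x u \/ S2 x u); split.
- by move=> x u [/S1_traj|/S2_traj].
- move=> g Sg; rewrite mul_mx_row -row_mx0; congr row_mx.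
    by apply: S1_span => x u Sxu; apply: (Sg x); left.
  by apply: S2_span => x u Sxu; apply: (Sg x); right.
move=> y1 y2; rewrite !mul_mx_row add_row_mx -row_mx0 => /eq_row_mx[annih1 annih2].
move=> x u [Sxu|Sxu]; first exact: S1_cover annih1 _ _ Sxu.
exact: S2_cover annih2 _ _ Sxu.
Qed.

Lemma windowed0 N N' : @windowed N N' 0 0 0.
Proof. by exists (fun _ _ => False); split=> // g _; rewrite mulmx0. Qed.

Lemma windowed_cum x u alpha p T0 :
  (forall i, (i < p)%N -> is_traj A B (x i) (u i) T0) -> (L + n <= T0)%N ->
  windowed (hankel_cum L x alpha p T0) (hankel_cum L u alpha p T0)
    (hankel_cum (L + n) u alpha p T0).
Proof.
rewrite !hankel_cumE => tr leT0; apply: windowed_hankel leT0.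
by apply: is_traj_sum => i; apply: tr.
Qed.

Lemma windowed_mos x u alpha p T :
  (forall i, (i < p)%N -> is_traj A B (x i) (u i) (T i)) ->
  (forall i, (i < p)%N -> (L + n <= T i)%N) ->
  windowed (hankel_mos L x alpha p T) (hankel_mos L u alpha p T)
    (hankel_mos (L + n) u alpha p T).
Proof.
rewrite !hankel_mosE => tr leT; apply: windowed_mxrow => i.
by apply: windowed_hankel (leT i (ltn_ord i)); apply/is_trajZ/tr.
Qed.

End Fundamental.

Section Cases.
Variables (R : fieldType) (n m L : nat) (A : 'M[R]_n) (B : 'M[R]_(n, m)).
Variables (x : nat -> nat -> 'cV[R]_n) (u : nat -> nat -> 'cV[R]_m) (alpha : nat -> R).
Variables (xb : nat -> 'cV[R]_n) (ub : nat -> 'cV[R]_m).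
Hypotheses (L_gt0 : (0 < L)%N) (ctrl : controllable A B) (traj_b : is_traj A B xb ub L).

Theorem cumulative_fundamental p T0 :
  (forall i, (i < p)%N -> is_traj A B (x i) (u i) T0) ->
  (forall i, (i < p)%N -> alpha i != 0) -> CCPE u p T0 (L + n) ->
  exists g, col_mx (stack L xb) (stack L ub) =
            col_mx (hankel_cum L x alpha p T0) (hankel_cum L u alpha p T0) *m g.
Proof.
move=> tr alpha_neq0 [leT0 exc].
exact (windowed_colspace L_gt0 ctrl (windowed_cum alpha tr leT0)
  (exc alpha alpha_neq0) traj_b).
Qed.

Theorem mosaic_fundamental p T :
  (forall i, (i < p)%N -> is_traj A B (x i) (u i) (T i)) ->
  (forall i, (i < p)%N -> alpha i != 0) -> MCPE u p T (L + n) ->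
  exists g, col_mx (stack L xb) (stack L ub) =
            col_mx (hankel_mos L x alpha p T) (hankel_mos L u alpha p T) *m g.
Proof.
move=> tr alpha_neq0 [leT exc].
exact (windowed_colspace L_gt0 ctrl (windowed_mos alpha tr leT)
  (exc alpha alpha_neq0) traj_b).
Qed.

Theorem hybrid_fundamental pbar p T0 T :
  (forall i, (i < p)%N -> is_traj A B (x i) (u i) (T i)) ->
  (forall i, (i < pbar)%N -> T i = T0) ->
  (forall i, (i < p)%N -> alpha i != 0) -> HCPE u pbar p T0 T (L + n) ->
  exists g, col_mx (stack L xb) (stack L ub) =
    col_mx (hankel_hyb L x alpha pbar p T0 T) (hankel_hyb L u alpha pbar p T0 T) *m g.
Proof.
move=> tr T_cum alpha_neq0 [le_pbar_p [leT0 [leT exc]]].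
apply: (windowed_colspace L_gt0 ctrl _ (exc alpha alpha_neq0) traj_b).
apply: windowed_row_mx.
  (* For pbar = 0 the cumulative block is an empty sum and T0 is unconstrained. *)
  have [-> | pbar_gt0] := posnP pbar.
    by rewrite /hankel_cum !big_ord0; apply: windowed0.
  by apply: windowed_cum (leT0 pbar_gt0) => i lti; rewrite -(T_cum i lti); apply: tr; lia.
by apply: windowed_mos => i lti; [apply: tr | apply: leT]; lia.
Qed.

End Cases.

Unset Implicit Arguments. Set Strict Implicit. Set Printing Implicit Defensive.

Theorem lemma2 (R : realType) (n m : nat) (A : 'M[R]_n) (B : 'M[R]_(n, m))
  (p : nat) (x : nat -> nat -> 'cV[R]_n) (u : nat -> nat -> 'cV[R]_m)
  (T : nat -> nat) (L : nat) (alpha : nat -> R) :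
  controllable A B ->
  (forall i, (i < p)%N -> is_traj A B (x i) (u i) (T i)) ->
  (1 <= L)%N ->
  (forall i, (i < p)%N -> alpha i != 0) ->
  [/\
   (* 1) cumulative *)
   forall T0 : nat, (forall i, (i < p)%N -> T i = T0) ->
     CCPE u p T0 (L + n) ->
     forall (xb : nat -> 'cV[R]_n) (ub : nat -> 'cV[R]_m), is_traj A B xb ub L ->
     exists g : 'cV[R]_(T0 - L + 1),
       col_mx (stack L xb) (stack L ub) =
       col_mx (hankel_cum L x alpha p T0) (hankel_cum L u alpha p T0) *m g,
   (* 2) mosaic *)
   MCPE u p T (L + n) ->
     forall (xb : nat -> 'cV[R]_n) (ub : nat -> 'cV[R]_m), is_traj A B xb ub L ->
     exists g : 'cV[R]_(\sum_(i < p) (T i - L + 1)),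
       col_mx (stack L xb) (stack L ub) =
       col_mx (hankel_mos L x alpha p T) (hankel_mos L u alpha p T) *m g
   & (* 3) hybrid *)
   forall (pbar T0 : nat), (forall i, (i < pbar)%N -> T i = T0) ->
     HCPE u pbar p T0 T (L + n) ->
     forall (xb : nat -> 'cV[R]_n) (ub : nat -> 'cV[R]_m), is_traj A B xb ub L ->
     exists g,
       col_mx (stack L xb) (stack L ub) =
       col_mx (hankel_hyb L x alpha pbar p T0 T)
              (hankel_hyb L u alpha pbar p T0 T) *m g].
Proof.
move=> ctrl traj L_gt0 alpha_neq0; split.
- move=> T0 T_eq ccpe xb ub traj_b.
  have traj0 i : (i < p)%N -> is_traj A B (x i) (u i) T0.
    by move=> lti; rewrite -(T_eq i lti); apply: traj.
  exact (cumulative_fundamental L_gt0 ctrl traj_b traj0 alpha_neq0 ccpe).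
- move=> mcpe xb ub traj_b.
  exact (mosaic_fundamental L_gt0 ctrl traj_b traj alpha_neq0 mcpe).
- move=> pbar T0 T_eq hcpe xb ub traj_b.
  exact (hybrid_fundamental L_gt0 ctrl traj_b traj T_eq alpha_neq0 hcpe).
Qed.
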